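(* Let $G=(V,E)$ be a graph with $V=\{1,\dots,n\}$ and let $k\ge 2$ be an integer with $\binom{k}{2}\le|E|$. For each edge $e=\{i,j\}$ let $\psi^e\in\mathbb{R}^n$ be the vector with $\psi^e_i=\psi^e_j=1$ and all other coordinates $0$. Let \[ S=\Big\{x\in\mathbb{R}^n:\ |\{e\in E: x\ge\psi^e \text{ coordinatewise}\}|\ge\tbinom{k}{2}\Big\}. \] Then (i) $S$ is star-shaped, with $(1,\dots,1)\in K_S$; and (ii) $G$ has a clique with $k$ vertices if and only if there exists $x\in S$ with $\sum_{i=1}^n x_i\le k$.
   Context: The kernel of a set $S\subseteq\mathbb{R}^n$ is $K_S=\{x\in S:[x,y]\subseteq S\ \forall y\in S\}$, where $[x,y]$ is the closed segment; $S$ is star-shaped if $K_S\ne\emptyset$. *)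

(* Vectors of R^n are row vectors 'rV[R]_n over an arbitrary
   real field R; vertices {1..n} are 'I_n. *)
From HB Require Import structures.
From mathcomp Require Import all_boot all_order all_algebra.
Set Implicit Arguments. Unset Strict Implicit. Unset Printing Implicit Defensive.
Import Order.TTheory GRing.Theory Num.Theory.
Local Open Scope ring_scope.

Section Defs.
Variable R : realFieldType.

Definition segment_in (n : nat) (S : 'rV[R]_n -> Prop) (x y : 'rV[R]_n) : Prop :=
  forall t : R, 0 <= t -> t <= 1 -> S ((1 - t) *: x + t *: y).

Definition in_kernel (n : nat) (S : 'rV[R]_n -> Prop) (x : 'rV[R]_n) : Prop :=
  S x /\ forall y, S y -> segment_in S x y.

Definition star_shaped (n : nat) (S : 'rV[R]_n -> Prop) : Prop :=
  exists x, in_kernel S x.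

(* Edge set of a simple graph given by a symmetric irreflexive relation:
   each edge {i,j} represented once as the pair (i,j) with i < j. *)
Definition edges (n : nat) (e : rel 'I_n) : {set 'I_n * 'I_n} :=
  [set p : 'I_n * 'I_n | ((p.1 < p.2)%N && e p.1 p.2)].

Definition psi (n : nat) (p : 'I_n * 'I_n) : 'rV[R]_n :=
  \row_i (if (i == p.1) || (i == p.2) then 1 else 0).

Definition dominates (n : nat) (x : 'rV[R]_n) (p : 'I_n * 'I_n) : bool :=
  [forall i, psi p 0 i <= x 0 i].

Definition Sset (n : nat) (e : rel 'I_n) (k : nat) (x : 'rV[R]_n) : Prop :=
  ('C(k, 2) <= #|[set p in edges e | dominates x p]|)%N.

End Defs.

Definition has_clique (n : nat) (e : rel 'I_n) (k : nat) : Prop :=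
  exists Q : {set 'I_n}, #|Q| = k /\
    forall i j, i \in Q -> j \in Q -> i != j -> e i j.

From HB Require Import structures.
From mathcomp Require Import all_boot all_order all_algebra.
Import Order.TTheory GRing.Theory Num.Theory.
Set Implicit Arguments. Unset Strict Implicit. Unset Printing Implicit Defensive.

(* Proof of the star-shapedness / clique characterisation of the set
     S = { x | at least C(k,2) edges e satisfy x >= psi^e }.
   (i)  Every psi^e is a 0/1 vector, so x >= psi^e forces x >= 0, and then
        every point (1-t)*1 + t*y of a segment from the all-ones vector to y
        dominates every psi^e that y dominates; the all-ones vector itself
        dominates every edge, hence lies in S when C(k,2) <= |E|.
   (ii) A k-clique Q gives its indicator vector, of coordinate sum k, which
        dominates the C(k,2) edges inside Q.  Conversely, if x is in S with
        coordinate sum at most k, every dominated edge has both endpoints in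
        Q = { i | x_i >= 1 }, and |Q| <= sum x <= k.  Since the pairs inside
        Q number C(|Q|,2) and C(_,2) is strictly increasing from 1 on, the
        count C(k,2) forces |Q| = k and every pair inside Q to be an edge. *)

Section Pairs.
Variable n : nat.

Definition pairs_in (Q : {set 'I_n}) : {set 'I_n * 'I_n} :=
  [set p : 'I_n * 'I_n | [&& (p.1 < p.2)%N, p.1 \in Q & p.2 \in Q]].

(* The map (i,j) |-> {i,j} is a bijection onto the 2-subsets of Q. *)
Lemma card_pairs_in (Q : {set 'I_n}) : #|pairs_in Q| = 'C(#|Q|, 2).
Proof.
rewrite -cards_draws.
have -> : [set A : {set 'I_n} | A \subset Q & #|A| == 2] =
          [set [set p.1; p.2] | p in pairs_in Q].
  apply/setP => A; rewrite inE; apply/idP/imsetP.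
    case/andP=> sAQ /cards2P [x [y [nxy defA]]].
    have xQ : x \in Q by apply: (subsetP sAQ); rewrite defA !inE eqxx.
    have yQ : y \in Q by apply: (subsetP sAQ); rewrite defA !inE eqxx orbT.
    case: (ltngtP x y) => [lxy|lyx|exy].
    - by exists (x, y) => //; rewrite inE /= lxy xQ yQ.
    - by exists (y, x); [rewrite inE /= lyx xQ yQ | rewrite /= setUC].
    - by move: nxy; rewrite (val_inj exy) eqxx.
  case=> [[a b]]; rewrite inE /= => /and3P [lab aQ bQ] ->.
  rewrite cards2 neq_ltn lab andbT; apply/subsetP => z; rewrite !inE.
  by case/orP => /eqP ->.
rewrite card_in_imset // => [[a b] [c d]].
rewrite !inE /= => /and3P [lab _ _] /and3P [lcd _ _] Eabcd.
have : a \in [set c; d] by rewrite -Eabcd !inE eqxx.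
have : b \in [set c; d] by rewrite -Eabcd !inE eqxx orbT.
rewrite !inE => /orP [] /eqP eb /orP [] /eqP ea; subst => //.
- by rewrite ltnn in lab.
- by move: (ltn_trans lab lcd); rewrite ltnn.
- by rewrite ltnn in lab.
Qed.

Lemma clique_of_pairs (e : rel 'I_n) (Q : {set 'I_n}) :
  symmetric e -> pairs_in Q \subset edges e ->
  forall i j, i \in Q -> j \in Q -> i != j -> e i j.
Proof.
move=> e_sym sQE.
have edge_lt a b : a \in Q -> b \in Q -> (a < b)%N -> e a b.
  move=> aQ bQ lab; have : (a, b) \in edges e.
    by apply: (subsetP sQE); rewrite inE /= lab aQ bQ.
  by rewrite inE => /andP [].
move=> i j iQ jQ; rewrite neq_ltn => /orP [lij | lji].
- exact: edge_lt.
- by rewrite e_sym; apply: edge_lt.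
Qed.

End Pairs.

(* For k >= 2, C(q,2) < C(k,2) whenever q < k: C(k,2) = C(k-1,2) + (k-1). *)
Lemma bin2_lt (q k : nat) : (2 <= k)%N -> (q < k)%N -> ('C(q, 2) < 'C(k, 2))%N.
Proof.
move=> hk lqk; have k_gt0 : (0 < k)%N by apply: leq_trans hk.
rewrite -(prednK k_gt0) binS bin1.
have lq_pk : (q <= k.-1)%N by rewrite -ltnS prednK.
have pk_gt0 : (0 < k.-1)%N by rewrite -ltnS prednK.
by rewrite -addn1 (leq_add (leq_bin2l 2 lq_pk) pk_gt0).
Qed.

Local Open Scope ring_scope.

Section Domination.
Variables (R : realFieldType) (n : nat).
Implicit Types (x y : 'rV[R]_n) (p : 'I_n * 'I_n).

Lemma psi01 p i : psi R p 0 i = 0 \/ psi R p 0 i = 1.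
Proof. by rewrite mxE; case: ifP; auto. Qed.

Lemma dominates_ge0 x p : dominates x p -> forall i, 0 <= x 0 i.
Proof.
move=> /forallP dom i; apply: le_trans (dom i).
by case: (psi01 p i) => ->.
Qed.

Lemma dominates_ones p : dominates (const_mx 1 : 'rV[R]_n) p.
Proof. by apply/forallP => i; rewrite [X in _ <= X]mxE; case: (psi01 p i) => ->. Qed.

(* Moving from the all-ones vector towards y keeps every edge dominated by y
   dominated: this is why the all-ones vector lies in the kernel. *)
Lemma dominates_towards_ones x p t : 0 <= t -> t <= 1 -> dominates x p ->
  dominates ((1 - t) *: (const_mx 1 : 'rV[R]_n) + t *: x) p.
Proof.
move=> t0 t1 dom; have x_ge0 := dominates_ge0 dom.
move/forallP: dom => dom; apply/forallP => i; move: (dom i).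
case: (psi01 p i) => -> => [_ | x1]; rewrite !mxE mulr1.
- by rewrite addr_ge0 ?mulr_ge0 ?subr_ge0.
- by rewrite -{1}(subrK t 1) lerD2l ler_peMr.
Qed.

Lemma Sset_dominates (e : rel 'I_n) k x y :
  (forall p, dominates x p -> dominates y p) -> Sset e k x -> Sset e k y.
Proof.
move=> dxy Sx; apply: (leq_trans Sx); apply: subset_leq_card.
by apply/subsetP => p; rewrite !inE => /andP [-> /dxy].
Qed.

Lemma ones_in_kernel (e : rel 'I_n) k : ('C(k, 2) <= #|edges e|)%N ->
  in_kernel (Sset e k) (const_mx 1 : 'rV[R]_n).
Proof.
move=> hE; split.
  apply: (leq_trans hE); apply: subset_leq_card.
  by apply/subsetP => p pE; rewrite inE pE dominates_ones.
move=> y Sy t t0 t1; apply: Sset_dominates Sy => p.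
exact: dominates_towards_ones.
Qed.

Definition indicator (Q : {set 'I_n}) : 'rV[R]_n := \row_i (if i \in Q then 1 else 0).

Lemma sum_indicator Q : \sum_(i < n) indicator Q 0 i = #|Q|%:R.
Proof.
under eq_bigr do rewrite mxE.
by rewrite -big_mkcond sumr_const.
Qed.

Lemma indicator_dominates Q p : p \in pairs_in Q -> dominates (indicator Q) p.
Proof.
rewrite inE => /and3P [_ p1Q p2Q]; apply/forallP => i; rewrite !mxE.
by case: ifP => [/orP [] /eqP -> | _]; rewrite ?p1Q ?p2Q //; case: ifP.
Qed.

Definition large_coords x : {set 'I_n} := [set i | 1 <= x 0 i].

Lemma dominated_edges_sub (e : rel 'I_n) x :
  [set p in edges e | dominates x p] \subset pairs_in (large_coords x).
Proof.
apply/subsetP => p; rewrite !inE => /andP [/andP [lp _] /forallP dom].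
rewrite lp /=; apply/andP; split.
- by have := dom p.1; rewrite mxE eqxx.
- by have := dom p.2; rewrite mxE eqxx orbT.
Qed.

Lemma card_large_coords x : (forall i, 0 <= x 0 i) ->
  #|large_coords x|%:R <= \sum_(i < n) x 0 i.
Proof.
move=> x_ge0; rewrite (bigID (mem (large_coords x))) /= -[X in X <= _]addr0.
apply: lerD; last by apply: sumr_ge0.
by rewrite -sumr_const; apply: ler_sum => i; rewrite inE.
Qed.

End Domination.

Theorem mainTheorem17 (R : realFieldType) (n : nat) (e : rel 'I_n)
  (e_sym : symmetric e) (e_irr : irreflexive e) (k : nat)
  (hk : (2 <= k)%N) (hE : ('C(k, 2) <= #|edges e|)%N) :
  (star_shaped (Sset (R := R) e k) /\ in_kernel (Sset e k) (const_mx 1 : 'rV[R]_n))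
  /\ (has_clique e k <->
      exists x : 'rV[R]_n, Sset e k x /\ \sum_(i < n) x 0 i <= k%:R).
Proof.
have ker := ones_in_kernel R hE.
split; first by split => //; exists (const_mx 1).
split.
  case=> Q [cQ cliqueQ]; exists (indicator R Q); rewrite sum_indicator cQ.
  split => //; rewrite /Sset -cQ -card_pairs_in; apply: subset_leq_card.
  apply/subsetP => p pQ; rewrite inE indicator_dominates // andbT inE.
  move: pQ; rewrite inE => /and3P [lp p1Q p2Q].
  by rewrite lp cliqueQ // neq_ltn lp.
case=> x [Sx sum_x]; set D := [set p in edges e | dominates x p] in Sx.
set Q := large_coords x.
have [p0 p0D] : exists p0, p0 \in D.
  by apply/set0Pn; rewrite -card_gt0 (leq_trans _ Sx) // bin_gt0.
have x_ge0 : forall i, 0 <= x 0 i by move: p0D; rewrite inE => /andP [_ /dominates_ge0].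
have DQ : D \subset pairs_in Q := dominated_edges_sub e x.
have QleC : (#|Q| <= k)%N by rewrite -(ler_nat R) (le_trans (card_large_coords x_ge0)).
have CleQ : ('C(k, 2) <= 'C(#|Q|, 2))%N by rewrite -card_pairs_in (leq_trans Sx) ?subset_leq_card.
have cQ : #|Q| = k.
  apply/eqP; rewrite eqn_leq QleC leqNgt; apply/negP => lt_Qk.
  by move: (leq_trans (bin2_lt hk lt_Qk) CleQ); rewrite ltnn.
have DeQ : D = pairs_in Q by apply/eqP; rewrite eqEcard DQ card_pairs_in cQ Sx.
exists Q; split => //; apply: clique_of_pairs e_sym _.
by rewrite -DeQ; apply/subsetP => p; rewrite inE => /andP [].
Qed.
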